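(* In the multi-parameter setting described in the context, for every Kraus representation $\{E_k(\theta)\}$ of the channel, $H(\theta)\le C_E(\theta)$ as $m\times m$ real symmetric matrices, where $C_E(\theta)_{jk}=4\sum_l\mathrm{Re}\,\mathrm{tr}\{E_l^{(j)}(\theta)\rho_0E_l^{(k)}(\theta)^\dagger\}$.
   Context: A multi-parameter quantum channel on density matrices on $\mathbb{C}^d$ is $\rho_0\mapsto\sum_kE_k(\theta)\rho_0E_k(\theta)^\dagger$ with $\theta=(\theta^1,\dots,\theta^m)\in\mathbb{R}^m$, Kraus operators differentiable in $\theta$, $\sum_kE_k^\dagger E_k=I$; a channel may have many Kraus representations. The input is a fixed pure state $\rho_0=|\psi_0\rangle\langle\psi_0|$ with output $\rho_{out}(\theta)$. Write $X^{(j)}=\partial X/\partial\theta^j$. The SLD quantum information matrix is $H(\theta)_{jk}=\mathrm{Re}\,\mathrm{tr}\{\lambda^{(j)}\rho_{out}\lambda^{(k)}\}$, with $\lambda^{(j)}$ a self-adjoint solution of $\partial\rho_{out}/\partial\theta^j=\frac12(\rho_{out}\lambda^{(j)}+\lambda^{(j)}\rho_{out})$. *)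

From HB Require Import structures.
From mathcomp Require Import all_boot all_order all_algebra.
From mathcomp Require Import all_classical all_reals all_analysis.
From mathcomp Require Import complex.
Set Implicit Arguments.
Unset Strict Implicit.
Unset Printing Implicit Defensive.
Import Order.TTheory GRing.Theory Num.Theory.
Import numFieldNormedType.Exports.
Local Open Scope ring_scope.

Section QuantumDefs.
Context {R : realType}.

Definition adj (p q : nat) (A : 'M[R[i]]_(p, q)) : 'M[R[i]]_(q, p) :=
  \matrix_(i, j) (A j i)^*%C.

Definition ebasis (m : nat) (j : 'I_m) : 'rV[R]_m := delta_mx 0 j.

Definition pderiv (m d : nat) (F : 'rV[R]_m -> 'M[R[i]]_d) (th : 'rV[R]_m)
  (j : 'I_m) : 'M[R[i]]_d :=
  \matrix_(a, b)
    complex.Complex ('D_(ebasis j) (fun t => complex.Re (F t a b)) th)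
            ('D_(ebasis j) (fun t => complex.Im (F t a b)) th).

Definition mx_differentiable (m d : nat) (F : 'rV[R]_m -> 'M[R[i]]_d) :=
  forall (a b : 'I_d) (th : 'rV[R]_m),
    differentiable (fun t => complex.Re (F t a b)) th /\
    differentiable (fun t => complex.Im (F t a b)) th.

Definition is_kraus (n m d : nat) (E : 'I_n -> 'rV[R]_m -> 'M[R[i]]_d) :=
  forall th, \sum_(k < n) adj (E k th) *m E k th = 1%:M.

Definition pure_state (d : nat) (psi : 'cV[R[i]]_d) : 'M[R[i]]_d :=
  psi *m adj psi.

Definition rho_out (n m d : nat) (E : 'I_n -> 'rV[R]_m -> 'M[R[i]]_d)
  (psi : 'cV[R[i]]_d) (th : 'rV[R]_m) : 'M[R[i]]_d :=
  \sum_(k < n) E k th *m pure_state psi *m adj (E k th).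

Definition is_SLD (m d : nat) (rho : 'rV[R]_m -> 'M[R[i]]_d) (th : 'rV[R]_m)
  (j : 'I_m) (lam : 'M[R[i]]_d) :=
  adj lam = lam /\
  pderiv rho th j = (2%:R^-1 : R[i]) *: (rho th *m lam + lam *m rho th).

Definition SLD_info (m d : nat) (rho : 'M[R[i]]_d) (lam : 'I_m -> 'M[R[i]]_d)
  : 'M[R]_m :=
  \matrix_(j, k) complex.Re (\tr (lam j *m rho *m lam k)).

Definition C_E (n m d : nat) (E : 'I_n -> 'rV[R]_m -> 'M[R[i]]_d)
  (psi : 'cV[R[i]]_d) (th : 'rV[R]_m) : 'M[R]_m :=
  \matrix_(j, k) (4%:R * \sum_(l < n)
     complex.Re (\tr (pderiv (E l) th j *m pure_state psi *m adj (pderiv (E l) th k)))).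

Definition loewner_le (m : nat) (A B : 'M[R]_m) :=
  forall v : 'rV[R]_m, (v *m A *m v^T) 0 0 <= (v *m B *m v^T) 0 0.

End QuantumDefs.

From HB Require Import structures.
From mathcomp Require Import all_boot all_order all_algebra.
From mathcomp Require Import all_classical all_reals all_analysis.
From mathcomp Require Import complex.
From mathcomp Require Import ring lra.
Import Order.TTheory GRing.Theory Num.Theory.
Local Open Scope ring_scope.
Set Implicit Arguments.
Unset Strict Implicit.

(* Fix c in R^m and put L = sum_j c_j lam_j and D_k = sum_j c_j dE_k/dtheta^j.
   The derivative of rho_out in the direction c is
   sum_k (D_k rho0 E_k^dagger + E_k rho0 D_k^dagger), which by the SLD equation
   is (rho L + L rho)/2.  Expanding the nonnegative quantity
   sum_k tr (X_k rho0 X_k^dagger) for X_k = L E_k - 2 D_k, the cross terms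
   contribute -2 tr (L rho L), and what remains is c^T C_E c - c^T H c. *)

Section ComplexDerivative.
Context {R : realType} {m : nat} (x v : 'rV[R]_m).
Local Notation Re := (@complex.Re R).
Local Notation Im := (@complex.Im R).

Definition is_cderive (f : 'rV[R]_m -> R[i]) (df : R[i]) :=
  is_derive x v (fun t => Re (f t)) (Re df) /\
  is_derive x v (fun t => Im (f t)) (Im df).

Lemma is_cderive_eq f g df dg :
  f =1 g -> df = dg -> is_cderive f df -> is_cderive g dg.
Proof. by move=> /funext -> ->. Qed.

Lemma is_cderive_cst c : is_cderive (fun=> c) 0.
Proof. by split; exact: is_derive_cst. Qed.

Lemma is_cderiveD f g df dg : is_cderive f df -> is_cderive g dg ->
  is_cderive (fun t => f t + g t) (df + dg).
Proof.
move=> [f1 f2] [g1 g2]; split; rewrite raddfD.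
- have -> : (fun t => Re (f t + g t)) = (fun t => Re (f t)) + (fun t => Re (g t)).
    by apply: funext => t; rewrite raddfD.
  exact: is_deriveD.
- have -> : (fun t => Im (f t + g t)) = (fun t => Im (f t)) + (fun t => Im (g t)).
    by apply: funext => t; rewrite raddfD.
  exact: is_deriveD.
Qed.

Lemma is_cderive_sum n (f : 'I_n -> 'rV[R]_m -> R[i]) df :
  (forall i, is_cderive (f i) (df i)) ->
  is_cderive (fun t => \sum_(i < n) f i t) (\sum_(i < n) df i).
Proof.
move=> fdf; rewrite -fct_sumE.
by elim/big_ind2: _ => // *; [exact: is_cderive_cst | exact: is_cderiveD].
Qed.

Lemma is_cderiveM f g df dg : is_cderive f df -> is_cderive g dg ->
  is_cderive (fun t => f t * g t) (df * g x + f x * dg).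
Proof.
have ReM (a b : R[i]) : Re (a * b) = Re a * Re b - Im a * Im b by case: a; case: b.
have ImM (a b : R[i]) : Im (a * b) = Re a * Im b + Im a * Re b by case: a; case: b.
move=> [f1 f2] [g1 g2]; split.
- have -> : (fun t => Re (f t * g t)) = (fun t => Re (f t)) * (fun t => Re (g t))
      - (fun t => Im (f t)) * (fun t => Im (g t)).
    by apply: funext => t; rewrite ReM.
  apply: (is_derive_eq (is_deriveB (is_deriveM f1 g1) (is_deriveM f2 g2))).
  by move: (f x) (g x) (df) (dg) => [? ?] [? ?] [? ?] [? ?]; rewrite /GRing.scale /=; ring.
- have -> : (fun t => Im (f t * g t)) = (fun t => Re (f t)) * (fun t => Im (g t))
      + (fun t => Im (f t)) * (fun t => Re (g t)).
    by apply: funext => t; rewrite ImM.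
  apply: (is_derive_eq (is_deriveD (is_deriveM f1 g2) (is_deriveM f2 g1))).
  by move: (f x) (g x) (df) (dg) => [? ?] [? ?] [? ?] [? ?]; rewrite /GRing.scale /=; ring.
Qed.

Lemma is_cderiveJ f df : is_cderive f df -> is_cderive (fun t => (f t)^*%C) df^*%C.
Proof.
have ReJ (a : R[i]) : Re a^*%C = Re a by case: a.
have ImJ (a : R[i]) : Im a^*%C = - Im a by case: a.
move=> [f1 f2]; split; rewrite ?ReJ ?ImJ.
- by have -> : (fun t => Re (f t)^*%C) = (fun t => Re (f t)) by apply: funext => t; rewrite ReJ.
- have -> : (fun t => Im (f t)^*%C) = - (fun t => Im (f t)) by apply: funext => t; rewrite ImJ.
  exact: is_deriveN.
Qed.

Definition is_mxderive p q (F : 'rV[R]_m -> 'M[R[i]]_(p, q)) (D : 'M[R[i]]_(p, q)) :=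
  forall a b, is_cderive (fun t => F t a b) (D a b).

Lemma is_mxderive_cst p q (A : 'M[R[i]]_(p, q)) : is_mxderive (fun=> A) 0.
Proof. by move=> a b; rewrite mxE; exact: is_cderive_cst. Qed.

Lemma is_mxderive_sum n p q (F : 'I_n -> 'rV[R]_m -> 'M[R[i]]_(p, q)) D :
  (forall k, is_mxderive (F k) (D k)) ->
  is_mxderive (fun t => \sum_(k < n) F k t) (\sum_(k < n) D k).
Proof.
move=> FD a b; apply: (is_cderive_eq _ _ (is_cderive_sum (fun k => FD k a b))).
  by move=> t; rewrite summxE.
by rewrite summxE.
Qed.

Lemma is_mxderiveM p q r (F : 'rV[R]_m -> 'M[R[i]]_(p, q))
    (G : 'rV[R]_m -> 'M[R[i]]_(q, r)) DF DG :
  is_mxderive F DF -> is_mxderive G DG ->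
  is_mxderive (fun t => F t *m G t) (DF *m G x + F x *m DG).
Proof.
move=> FD GD a b.
apply: (is_cderive_eq _ _ (is_cderive_sum (fun c => is_cderiveM (FD a c) (GD c b)))).
  by move=> t; rewrite mxE.
by rewrite !mxE -big_split.
Qed.

Lemma is_mxderive_adj p q (F : 'rV[R]_m -> 'M[R[i]]_(p, q)) D :
  is_mxderive F D -> is_mxderive (fun t => adj (F t)) (adj D).
Proof.
move=> FD a b; apply: (is_cderive_eq _ _ (is_cderiveJ (FD b a))).
  by move=> t; rewrite mxE.
by rewrite mxE.
Qed.

End ComplexDerivative.

Lemma pderiv_is_mxderive {R : realType} m d (F : 'rV[R]_m -> 'M[R[i]]_d) th j :
  mx_differentiable F -> is_mxderive th (ebasis j) F (pderiv F th j).
Proof.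
move=> dF a b; have [dRe dIm] := dF a b th.
by split; rewrite mxE /=; apply: derivableP; exact: diff_derivable.
Qed.

Lemma is_mxderive_pderiv {R : realType} m d (F : 'rV[R]_m -> 'M[R[i]]_d) th j D :
  is_mxderive th (ebasis j) F D -> pderiv F th j = D.
Proof.
move=> FD; apply/matrixP => a b; rewrite mxE.
by case: (FD a b) => [[_ ->] [_ ->]]; case: (D a b).
Qed.

Section ConjugateTranspose.
Context {R : realType}.
Local Notation Re := (@complex.Re R).

Lemma adjD p q (A B : 'M[R[i]]_(p, q)) : adj (A + B) = adj A + adj B.
Proof. by apply/matrixP=> a b; rewrite !mxE rmorphD. Qed.

Lemma adj0 p q : adj (0 : 'M[R[i]]_(p, q)) = 0.
Proof. by apply/matrixP=> a b; rewrite !mxE conjc0. Qed.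

Lemma adj_sum n p q (F : 'I_n -> 'M[R[i]]_(p, q)) :
  adj (\sum_(k < n) F k) = \sum_(k < n) adj (F k).
Proof. exact: (big_morph _ (@adjD p q) (@adj0 p q)). Qed.

Lemma adj_scale p q (c : R[i]) (A : 'M[R[i]]_(p, q)) : adj (c *: A) = c^*%C *: adj A.
Proof. by apply/matrixP=> a b; rewrite !mxE rmorphM. Qed.

Lemma adjM p q r (A : 'M[R[i]]_(p, q)) (B : 'M[R[i]]_(q, r)) :
  adj (A *m B) = adj B *m adj A.
Proof.
apply/matrixP=> a b; rewrite !mxE rmorph_sum; apply: eq_bigr => k _.
by rewrite !mxE rmorphM mulrC.
Qed.

Lemma mxtrace_mul_adj_ge0 p q (A : 'M[R[i]]_(p, q)) : 0 <= \tr (A *m adj A).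
Proof.
apply: sumr_ge0 => a _; rewrite mxE; apply: sumr_ge0 => b _.
by rewrite mxE; exact: mulcJ_ge0.
Qed.

Lemma mxtrace_pure_state_ge0 p d (X : 'M[R[i]]_(p, d)) (psi : 'cV[R[i]]_d) :
  0 <= \tr (X *m pure_state psi *m adj X).
Proof.
by rewrite /pure_state mulmxA -mulmxA -adjM; exact: mxtrace_mul_adj_ge0.
Qed.

Definition mxcomb m p q (c : 'rV[R]_m) (F : 'I_m -> 'M[R[i]]_(p, q)) :=
  \sum_(j < m) (c 0 j)%:C%C *: F j.

Lemma adj_mxcomb m p q (c : 'rV[R]_m) (F : 'I_m -> 'M[R[i]]_(p, q)) :
  adj (mxcomb c F) = mxcomb c (fun j => adj (F j)).
Proof. by rewrite adj_sum; apply: eq_bigr => j _; rewrite adj_scale conjc_real. Qed.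

Lemma mxtrace_sum n d (F : 'I_n -> 'M[R[i]]_d) :
  \tr (\sum_(k < n) F k) = \sum_(k < n) \tr (F k).
Proof. exact: (big_morph _ (@mxtraceD _ _) (@mxtrace0 _ _)). Qed.

Lemma mxtrace_mxcomb m p q r (c : 'rV[R]_m) (F : 'I_m -> 'M[R[i]]_(p, q))
    (Q : 'M[R[i]]_(q, r)) (G : 'I_m -> 'M[R[i]]_(r, p)) :
  \tr (mxcomb c F *m Q *m mxcomb c G) =
  \sum_(j < m) \sum_(k < m) (c 0 j * c 0 k)%:C%C * \tr (F j *m Q *m G k).
Proof.
rewrite /mxcomb !mulmx_suml mxtrace_sum; apply: eq_bigr => j _.
rewrite mulmx_sumr mxtrace_sum; apply: eq_bigr => k _.
by rewrite -!scalemxAl -scalemxAr !mxtraceZ rmorphM mulrA.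
Qed.

Lemma quad_formE m (c : 'rV[R]_m) (M : 'M[R]_m) :
  (c *m M *m c^T) 0 0 = \sum_(j < m) \sum_(k < m) c 0 j * c 0 k * M j k.
Proof.
rewrite mxE exchange_big; apply: eq_bigr => k _.
rewrite !mxE mulr_suml; apply: eq_bigr => j _; ring.
Qed.

Lemma quad_form_mxtraceE m p q r (c : 'rV[R]_m) (F : 'I_m -> 'M[R[i]]_(p, q))
    (Q : 'M[R[i]]_(q, r)) (G : 'I_m -> 'M[R[i]]_(r, p)) :
  (c *m (\matrix_(j, k) Re (\tr (F j *m Q *m G k))) *m c^T) 0 0 =
  Re (\tr (mxcomb c F *m Q *m mxcomb c G)).
Proof.
rewrite quad_formE mxtrace_mxcomb raddf_sum; apply: eq_bigr => j _.
rewrite raddf_sum; apply: eq_bigr => k _.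
by rewrite mxE; case: (\tr _) => a b /=; ring.
Qed.

End ConjugateTranspose.

Section SLDBound.
Context {R : realType}.
Local Notation Re := (@complex.Re R).

Lemma mxtrace_adj_expand d (L A B P : 'M[R[i]]_d) : adj L = L ->
  \tr ((L *m A + (- 2%:R) *: B) *m P *m adj (L *m A + (- 2%:R) *: B)) =
  \tr (L *m (A *m P *m adj A) *m L)
  - 2%:R * \tr ((B *m P *m adj A + A *m P *m adj B) *m L)
  + 4%:R * \tr (B *m P *m adj B).
Proof.
move=> adjL; rewrite adjD adj_scale adjM adjL rmorphN rmorph_nat.
rewrite !mulmxDl !mulmxDr -!scalemxAl -!scalemxAr !mxtraceD !mxtraceZ !mulmxA.
have -> : \tr (L *m A *m P *m adj B) = \tr (A *m P *m adj B *m L).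
  by rewrite -!mulmxA mxtrace_mulC !mulmxA.
ring.
Qed.

Lemma sld_mxtrace_le n d (E D : 'I_n -> 'M[R[i]]_d) (psi : 'cV[R[i]]_d)
    (rho L : 'M[R[i]]_d) :
  rho = \sum_(k < n) E k *m pure_state psi *m adj (E k) ->
  adj L = L ->
  \sum_(k < n) (D k *m pure_state psi *m adj (E k)
                + E k *m pure_state psi *m adj (D k))
    = 2%:R^-1 *: (rho *m L + L *m rho) ->
  Re (\tr (L *m rho *m L))
    <= 4%:R * Re (\sum_(k < n) \tr (D k *m pure_state psi *m adj (D k))).
Proof.
set P := pure_state psi => rhoE adjL sld.
pose T := \tr (L *m rho *m L).
have sum_direct : \sum_(k < n) \tr (L *m (E k *m P *m adj (E k)) *m L) = T.
  by rewrite -mxtrace_sum -mulmx_suml -mulmx_sumr -rhoE.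
have sum_cross : \sum_(k < n)
    \tr ((D k *m P *m adj (E k) + E k *m P *m adj (D k)) *m L) = T.
  rewrite -mxtrace_sum -mulmx_suml sld -scalemxAl mxtraceZ mulmxDl mxtraceD.
  rewrite mxtrace_mulC mulmxA -/T -mulr2n -[T *+ 2]mulr_natl.
  by rewrite mulKf // pnatr_eq0.
have : 0 <= \sum_(k < n)
    \tr ((L *m E k + (- 2%:R) *: D k) *m P *m adj (L *m E k + (- 2%:R) *: D k)).
  by apply: sumr_ge0 => k _; exact: mxtrace_pure_state_ge0.
under eq_bigr do rewrite mxtrace_adj_expand //.
rewrite big_split sumrB /= -!mulr_sumr sum_direct sum_cross.
rewrite lecE => /andP[_]; rewrite -/T.
clear sum_direct sum_cross; move: T (\sum_(k < n) _) => [a b] [c e] /=; lra.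
Qed.

End SLDBound.

Section Channel.
Context {R : realType} {n m d : nat}.
Variables (E : 'I_n -> 'rV[R]_m -> 'M[R[i]]_d) (psi : 'cV[R[i]]_d).
Hypothesis dE : forall k, mx_differentiable (E k).
Local Notation P := (pure_state psi).

Lemma pderiv_rho_out th j :
  pderiv (rho_out E psi) th j =
  \sum_(k < n) (pderiv (E k) th j *m P *m adj (E k th)
                + E k th *m P *m adj (pderiv (E k) th j)).
Proof.
apply: is_mxderive_pderiv; apply: is_mxderive_sum => k.
have dEk := pderiv_is_mxderive th j (dE k).
have := is_mxderiveM (is_mxderiveM dEk (is_mxderive_cst _ _ P)) (is_mxderive_adj dEk).
by rewrite mulmx0 addr0.
Qed.

Lemma mxcomb_pderiv_rho_out th (c : 'rV[R]_m) :
  mxcomb c (pderiv (rho_out E psi) th) =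
  \sum_(k < n) (mxcomb c (pderiv (E k) th) *m P *m adj (E k th)
                + E k th *m P *m adj (mxcomb c (pderiv (E k) th))).
Proof.
rewrite /mxcomb; under [LHS]eq_bigr do rewrite pderiv_rho_out scaler_sumr.
rewrite exchange_big; apply: eq_bigr => k _.
rewrite adj_mxcomb /mxcomb !mulmx_suml mulmx_sumr -big_split; apply: eq_bigr => j _.
by rewrite -!scalemxAl -scalemxAr scalerDr.
Qed.

Lemma C_E_quad_form th (c : 'rV[R]_m) :
  (c *m C_E E psi th *m c^T) 0 0 = 4%:R * complex.Re (\sum_(k < n)
    \tr (mxcomb c (pderiv (E k) th) *m P *m adj (mxcomb c (pderiv (E k) th)))).
Proof.
have -> : C_E E psi th = 4%:R *: \sum_(l < n)
    \matrix_(j, k) complex.Re (\tr (pderiv (E l) th j *m P *m adj (pderiv (E l) th k))).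
  apply/matrixP => j k; rewrite !mxE summxE; congr (_ * _).
  by apply: eq_bigr => l _; rewrite mxE.
rewrite -scalemxAr -scalemxAl mxE mulmx_sumr mulmx_suml summxE raddf_sum.
congr (_ * _); apply: eq_bigr => l _.
by rewrite quad_form_mxtraceE adj_mxcomb.
Qed.
End Channel.

Unset Implicit Arguments.
Set Strict Implicit.

Theorem lemma12 (R : realType) (n m d : nat)
  (E : 'I_n -> 'rV[R]_m -> 'M[R[i]]_d) (psi0 : 'cV[R[i]]_d)
  (th : 'rV[R]_m) (lam : 'I_m -> 'M[R[i]]_d) :
  adj psi0 *m psi0 = 1%:M ->
  is_kraus E ->
  (forall k, mx_differentiable (E k)) ->
  (forall j, is_SLD (rho_out E psi0) th j (lam j)) ->
  loewner_le (SLD_info (rho_out E psi0 th) lam) (C_E E psi0 th).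
Proof.
move=> _ _ dE sld c.
rewrite /SLD_info quad_form_mxtraceE C_E_quad_form.
apply: (sld_mxtrace_le (E := fun k => E k th)) => //.
  by rewrite adj_mxcomb; apply: eq_bigr => j _; rewrite (sld j).1.
rewrite -mxcomb_pderiv_rho_out // /mxcomb; under eq_bigr do rewrite (sld _).2.
rewrite mulmx_sumr mulmx_suml -big_split scaler_sumr; apply: eq_bigr => j _.
by rewrite scalerA mulrC -scalerA scalerDr scalemxAr scalemxAl.
Qed.
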